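(* Let $G$ be a non-complete finite simple graph of order $n$ with $\delta(G)\geq 1$. Then $\alpha^*(G)\leq \frac{2(n-1)}{\sigma_2(G)}$.
   Context: $\sigma_2(G)=\min\{d_G(u)+d_G(v): u\neq v,\ uv\notin E(G)\}$. An independent set $I$ of $G$ is light if $\sum_{u\in I}d_G(u)\le |V(G)|-1$; $\alpha^*(G)$ is the maximum size of a light independent set of $G$. *)

From mathcomp Require Import all_boot all_order all_algebra.
Set Implicit Arguments. Unset Strict Implicit. Unset Printing Implicit Defensive.

Definition simple_graph (T : finType) (e : rel T) : Prop :=
  symmetric e /\ irreflexive e.

Definition deg (T : finType) (e : rel T) (v : T) : nat := #|[set u | e v u]|.

Definition min_deg_ge1 (T : finType) (e : rel T) : Prop := forall v : T, 0 < deg e v.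

Definition complete (T : finType) (e : rel T) : Prop :=
  forall u v : T, u != v -> e u v.

(* sigma_2(G) = min { d(u)+d(v) : u <> v, uv not an edge }.
   The default value (used only for complete graphs) is irrelevant here. *)
Definition sigma2 (T : finType) (e : rel T) : nat :=
  \big[minn/(2 * #|T|)]_(p : T * T | (p.1 != p.2) && ~~ e p.1 p.2)
     (deg e p.1 + deg e p.2).

Definition independent (T : finType) (e : rel T) (I : {set T}) : bool :=
  [forall u in I, forall v in I, ~~ e u v].

Definition light (T : finType) (e : rel T) (I : {set T}) : bool :=
  independent e I && (\sum_(u in I) deg e u <= #|T|.-1)%N.

Definition alpha_star (T : finType) (e : rel T) : nat :=
  \max_(I : {set T} | light e I) #|I|.

From mathcomp Require Import all_boot all_order all_algebra.

Set Implicit Arguments.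
Unset Strict Implicit.
Unset Printing Implicit Defensive.

Import Order.TTheory GRing.Theory Num.Theory.
Local Open Scope ring_scope.

(* Two distinct vertices of an independent set I are non-adjacent, so their
   degrees sum to at least sigma_2; summing over ordered pairs of I gives
   |I| (|I| - 1) sigma_2 <= 2 (|I| - 1) sum_I deg <= 2 (|I| - 1) (n - 1) for a
   light I with |I| >= 2.  Sets with |I| <= 1 are handled by
   sigma_2 <= 2 (n - 1), valid as soon as some non-adjacent pair exists. *)

Section PairwiseSum.
Variables (T : finType) (f : T -> nat) (s : nat) (I : {set T}).
Hypothesis f_pair : {in I &, forall x y, x != y -> s <= f x + f y}%N.

Lemma pairwise_sum_at (x : T) : x \in I ->
  (#|I|.-1 * s + f x <= #|I|.-1 * f x + \sum_(y in I) f y)%N.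
Proof.
move=> xI; rewrite (cardsD1 x I) xI (big_setD1 x xI) /= addnCA addnC leq_add2l.
rewrite -!sum_nat_const -big_split /=; apply: leq_sum => y.
by rewrite !inE => /andP[yx yI]; rewrite f_pair // eq_sym.
Qed.

Lemma card_mul_leq_double_sum : (1 < #|I|)%N ->
  (#|I| * s <= 2 * \sum_(x in I) f x)%N.
Proof.
move=> I_gt1.
have : (\sum_(x in I) (#|I|.-1 * s + f x)
          <= \sum_(x in I) (#|I|.-1 * f x + \sum_(y in I) f y))%N.
  by apply: leq_sum; exact: pairwise_sum_at.
rewrite !big_split /= -!big_distrr /= !sum_nat_const.
case: #|I| I_gt1 => [|[|k]] // _ /=; set S := (\sum_(x in I) f x)%N.
rewrite [(k.+2 * S)%N]mulSn addnCA [X in (X <= _)%N]addnC leq_add2l -mulnDr.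
by rewrite leq_pmul2l // addnn -mul2n.
Qed.

End PairwiseSum.

Section Sigma2.
Variables (T : finType) (e : rel T).

Lemma deg_leq_pred_card (v : T) : irreflexive e -> (deg e v <= #|T|.-1)%N.
Proof.
move=> e_irr; rewrite /deg -(cardsC1 v); apply: subset_leq_card.
by apply/subsetP=> u; rewrite !inE; apply: contraTN => /eqP->; rewrite e_irr.
Qed.

Lemma not_complete_nonadj : ~ complete e -> exists u v, u != v /\ ~~ e u v.
Proof.
move=> e_ncomp; case: (pickP (fun p : T * T => (p.1 != p.2) && ~~ e p.1 p.2)).
  by move=> [u v] /andP[uv euv]; exists u, v.
move=> no_pair; case: e_ncomp => u v uv.
by move: (no_pair (u, v)); rewrite /= uv => /negbFE.
Qed.

Lemma sigma2_leq (u v : T) : u != v -> ~~ e u v ->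
  (sigma2 e <= deg e u + deg e v)%N.
Proof. by move=> uv euv; apply: (@bigmin_le_cond _ nat _ _ (u, v)); rewrite /= uv. Qed.

Lemma sigma2_gt0 : ~ complete e -> min_deg_ge1 e -> (0 < sigma2 e)%N.
Proof.
move=> /not_complete_nonadj[u _] deg_gt0.
have T_gt0 : (0 < #|T|)%N by apply/card_gt0P; exists u.
apply/(@bigmin_gtP _ nat); rewrite ltEnat /=.
by split=> [|p _]; rewrite ?muln_gt0 ?addn_gt0 ?deg_gt0.
Qed.

Lemma sigma2_leq_double_pred_card : irreflexive e -> ~ complete e ->
  (sigma2 e <= 2 * #|T|.-1)%N.
Proof.
move=> e_irr /not_complete_nonadj[u [v [uv euv]]].
apply: (leq_trans (sigma2_leq uv euv)).
by rewrite mul2n -addnn leq_add ?deg_leq_pred_card.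
Qed.

Lemma independent_nonadj (I : {set T}) : independent e I ->
  {in I &, forall x y, ~~ e x y}.
Proof. by move=> /forall_inP I_ind x y xI yI; apply: (forall_inP (I_ind x xI)). Qed.

Lemma light_card_mul_sigma2 (I : {set T}) : irreflexive e -> ~ complete e ->
  light e I -> (#|I| * sigma2 e <= 2 * #|T|.-1)%N.
Proof.
move=> e_irr e_ncomp /andP[I_ind I_light].
have [I_le1|I_gt1] := leqP #|I| 1.
  apply: leq_trans (sigma2_leq_double_pred_card e_irr e_ncomp).
  by rewrite -[leqRHS]mul1n leq_mul2r I_le1 orbT.
apply: (@leq_trans (2 * \sum_(x in I) deg e x)); last by rewrite leq_mul2l I_light orbT.
apply: card_mul_leq_double_sum I_gt1 => x y xI yI xy.
exact: sigma2_leq xy (independent_nonadj I_ind xI yI).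
Qed.

Lemma alpha_star_mul_sigma2 : irreflexive e -> ~ complete e -> min_deg_ge1 e ->
  (alpha_star e * sigma2 e <= 2 * #|T|.-1)%N.
Proof.
move=> e_irr e_ncomp deg_gt0; have sigma2_pos := sigma2_gt0 e_ncomp deg_gt0.
rewrite -leq_divRL //; apply/bigmax_leqP => I I_light.
by rewrite leq_divRL //; exact: light_card_mul_sigma2.
Qed.

End Sigma2.

Theorem proposition1p7 (T : finType) (e : rel T) :
  simple_graph e -> ~ complete e -> min_deg_ge1 e ->
  (alpha_star e)%:R <= (2 * (#|T| - 1)%N)%:R / (sigma2 e)%:R :> rat.
Proof.
move=> [_ e_irr] e_ncomp deg_gt0.
rewrite ler_pdivlMr ?ltr0n ?sigma2_gt0 // -natrM ler_nat subn1.
exact: alpha_star_mul_sigma2.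
Qed.
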